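(* Let $K\subset\mathbb{R}^n$ be a proper cone. (i) If $\emptyset\ne\mathcal{M}\subset\pi(K)$, then the convex hull $\operatorname{conv}\mathcal{M}$ contains a $K$-irreducible element if and only if for every nontrivial face $F$ of $K$ there exists $A\in\mathcal{M}$ such that $AF\not\subset F$. (ii) If $\emptyset\ne\mathcal{M}\subset\pi(K)+\Lambda$ is bounded, where $\Lambda=\{\lambda I:\lambda\in\mathbb{R}\}$, then $\operatorname{conv}\mathcal{M}$ contains an irreducible exponentially $K$-nonnegative element (i.e. an element $A$ for which no nontrivial face $F$ of $K$ has $A\,\operatorname{span}F\subset\operatorname{span}F$) if and only if for every nontrivial face $F$ of $K$ there exists $A\in\mathcal{M}$ such that $A\,\operatorname{span}F\not\subset\operatorname{span}F$.
   Context: A proper cone $K\subset\mathbb{R}^n$ is a nonempty set with $rK\subset K$ for all $r>0$ which is convex, pointed ($K\cap(-K)=\{0\}$), closed and has nonempty interior. Write $x\ge_K y$ if $x-y\in K$. A face of $K$ is a cone $F\subseteq K$ such that $x\in F$ and $x\ge_K y\ge_K 0$ imply $y\in F$; the faces $\{0\}$ and $K$ are trivial. $\pi(K)=\{A\in\mathbb{R}^{n\times n}: AK\subset K\}$; $A\in\pi(K)$ is $K$-irreducible if there is no nontrivial face $F$ of $K$ with $AF\subset F$. A matrix $A$ is exponentially $K$-nonnegative if $e^{At}K\subset K$ for all $t\ge0$ (every element of $\pi(K)+\Lambda$ has this property). *)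

From mathcomp Require Import all_boot.
From Stdlib Require Import Reals.

Set Implicit Arguments.
Unset Strict Implicit.

Local Open Scope R_scope.

Definition vec (n : nat) := 'I_n -> R.
Definition mat (n : nat) := 'I_n -> 'I_n -> R.

Definition vzero {n} : vec n := fun _ => 0.
Definition vscale {n} (r : R) (x : vec n) : vec n := fun i => r * x i.
Definition vadd {n} (x y : vec n) : vec n := fun i => x i + y i.
Definition vsub {n} (x y : vec n) : vec n := fun i => x i - y i.
Definition vopp {n} (x : vec n) : vec n := fun i => - x i.
Definition vsum {n m} (f : 'I_m -> vec n) : vec n :=
  fun i => \big[Rplus/0]_(k < m) f k i.

Definition mv {n} (A : mat n) (x : vec n) : vec n :=
  fun i => \big[Rplus/0]_(j < n) (A i j * x j).

Definition is_cone {n} (K : vec n -> Prop) : Prop :=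
  (exists x, K x) /\ (forall r x, 0 < r -> K x -> K (vscale r x)).

Definition convex_set {n} (K : vec n -> Prop) : Prop :=
  forall x y t, K x -> K y -> 0 <= t -> t <= 1 ->
    K (vadd (vscale t x) (vscale (1 - t) y)).

Definition pointed {n} (K : vec n -> Prop) : Prop :=
  forall x, K x -> K (vopp x) -> x = vzero.

Definition closed_set {n} (K : vec n -> Prop) : Prop :=
  forall x, (forall eps, 0 < eps -> exists y, K y /\ forall i, Rabs (x i - y i) < eps) -> K x.

Definition nonempty_interior {n} (K : vec n -> Prop) : Prop :=
  exists x eps, 0 < eps /\ forall y, (forall i, Rabs (y i - x i) < eps) -> K y.

Definition proper_cone {n} (K : vec n -> Prop) : Prop :=
  is_cone K /\ convex_set K /\ pointed K /\ closed_set K /\ nonempty_interior K.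

Definition coneLe {n} (K : vec n -> Prop) (x y : vec n) : Prop := K (vsub x y).

Definition is_face {n} (K F : vec n -> Prop) : Prop :=
  is_cone F /\ convex_set F /\ (forall x, F x -> K x) /\
  (forall x y, F x -> coneLe K x y -> coneLe K y vzero -> F y).

Definition nontrivial_face {n} (K F : vec n -> Prop) : Prop :=
  is_face K F /\ ~ (forall x, F x <-> x = vzero) /\ ~ (forall x, F x <-> K x).

Definition maps_into {n} (A : mat n) (S : vec n -> Prop) : Prop :=
  forall x, S x -> S (mv A x).

Definition piK {n} (K : vec n -> Prop) (A : mat n) : Prop := maps_into A K.

Definition K_irreducible {n} (K : vec n -> Prop) (A : mat n) : Prop :=
  piK K A /\ ~ (exists F, nontrivial_face K F /\ maps_into A F).

Definition span {n} (F : vec n -> Prop) (x : vec n) : Prop :=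
  exists m (c : 'I_m -> R) (v : 'I_m -> vec n),
    (forall k, F (v k)) /\ x = vsum (fun k => vscale (c k) (v k)).

Definition conv {n} (M : mat n -> Prop) (A : mat n) : Prop :=
  exists m (w : 'I_m -> R) (B : 'I_m -> mat n),
    (forall k, 0 <= w k) /\ \big[Rplus/0]_(k < m) w k = 1 /\
    (forall k, M (B k)) /\
    A = (fun i j => \big[Rplus/0]_(k < m) (w k * B k i j)).

Definition piK_plus_Lambda {n} (K : vec n -> Prop) (A : mat n) : Prop :=
  exists (B : mat n) (lam : R), piK K B /\
    A = (fun i j => B i j + (if i == j then lam else 0)).

Definition bounded_set {n} (M : mat n -> Prop) : Prop :=
  exists C, forall A, M A -> forall i j, Rabs (A i j) <= C.

Definition is_expAt {n} (A : mat n) (t : R) (x y : vec n) : Prop :=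
  forall i, Un_cv (fun N => sum_f_R0
      (fun k => t ^ k / INR (Factorial.fact k) * iter k (mv A) x i) N) (y i).

Definition exp_K_nonneg {n} (K : vec n -> Prop) (A : mat n) : Prop :=
  forall t x y, 0 <= t -> K x -> is_expAt A t x y -> K y.

Definition irreducible_exp_K_nonneg {n} (K : vec n -> Prop) (A : mat n) : Prop :=
  exp_K_nonneg K A /\ ~ (exists F, nontrivial_face K F /\ maps_into A (span F)).

(* Both parts rest on two observations.
   - Necessity: if every member of M leaves a set G invariant and G is a convex
     cone containing 0 (a face F, or its span), then so does every element of
     conv M; hence an irreducible element of conv M forbids such a common G.
   - Sufficiency: M lies in the linear span of finitely many of its members
     B_0, ..., B_(m-1) (a rank argument in R^(n*n)); take their average A.  If
     A, or in part (ii) the cone-preserving matrix D = A - L I, maps a face F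
     into itself, then the face property splits the sum D u = (1/m) sum C_k u
     for u in F, so each summand C_k maps F into F, hence each B_k, and then
     every linear combination of them, i.e. every member of M, leaves span F
     invariant.  Since K /\ span F = F this contradicts the hypothesis.
   Part (ii) additionally needs that A = D + L I is exponentially
   K-nonnegative: e^(At) x = e^(Lt) e^(Dt) x (a Cauchy product of series) and
   e^(Dt) x is a limit of nonnegative combinations of the vectors D^k x in K. *)
From mathcomp Require Import all_boot all_algebra.
From mathcomp Require Import Rstruct zify.
From Coquelicot Require Import Coquelicot.
From Stdlib Require Import Reals Lra FunctionalExtensionality Classical ClassicalEpsilon.
(* Imported last so that its names (e.g. closed_set) are not shadowed. *)
Set Implicit Arguments. Unset Strict Implicit.
Local Open Scope R_scope.

Section VectorAlgebra.
Variable n : nat.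

Lemma vec_ext (x y : vec n) : (forall i, x i = y i) -> x = y.
Proof. by move=> H; apply: functional_extensionality. Qed.

Lemma mat_ext (A B : mat n) : (forall i j, A i j = B i j) -> A = B.
Proof. by move=> H; do 2 (apply: functional_extensionality => ?). Qed.

Lemma sumR_ge0 m (P : pred 'I_m) (f : 'I_m -> R) : (forall k, 0 <= f k) ->
  0 <= \big[Rplus/0]_(k < m | P k) f k.
Proof. by move=> H; apply: (big_ind (fun v => 0 <= v)) => //; [lra | move=> a b; lra]. Qed.

Lemma sumR_const m (c : R) : \big[Rplus/0]_(k < m) c = INR m * c.
Proof.
elim: m => [|m IH]; first by rewrite big_ord0 /=; ring.
by rewrite big_ord_recr IH S_INR /=; ring.
Qed.

Definition norm1 (x : vec n) := \big[Rplus/0]_(i < n) Rabs (x i).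

Lemma norm1_ge0 x : 0 <= norm1 x.
Proof. by apply: sumR_ge0 => j; exact: Rabs_pos. Qed.

Lemma norm1_coord x i : Rabs (x i) <= norm1 x.
Proof.
rewrite /norm1 (bigD1 i) //=; set S := \big[Rplus/0]_(_ < n | _) _.
have : 0 <= S by apply: sumR_ge0 => j; exact: Rabs_pos.
lra.
Qed.

Lemma vsum_closed (G : vec n -> Prop) m (f : 'I_m -> vec n) :
  G vzero -> (forall x y, G x -> G y -> G (vadd x y)) -> (forall k, G (f k)) -> G (vsum f).
Proof.
move=> G0 GD; elim: m f => [|m IH] f Hf.
  by have -> : vsum f = vzero by apply: vec_ext => i; rewrite /vsum big_ord0.
have -> : vsum f = vadd (vsum (fun k => f (widen_ord (leqnSn m) k))) (f ord_max).
  by apply: vec_ext => i; rewrite /vsum /vadd big_ord_recr.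
by apply: GD; [apply: IH => k |]; apply: Hf.
Qed.

Lemma mv_add (A : mat n) x y : mv A (vadd x y) = vadd (mv A x) (mv A y).
Proof. by apply: vec_ext => i; rewrite /mv /vadd -big_split; apply: eq_bigr => j _ /=; ring. Qed.

Lemma mv_scale (A : mat n) r x : mv A (vscale r x) = vscale r (mv A x).
Proof. by apply: vec_ext => i; rewrite /mv /vscale big_distrr; apply: eq_bigr => j _ /=; ring. Qed.

Lemma mv_vsum (A : mat n) m (f : 'I_m -> vec n) : mv A (vsum f) = vsum (fun k => mv A (f k)).
Proof.
apply: vec_ext => i; rewrite /mv /vsum.
rewrite (eq_bigr (fun j => \big[Rplus/0]_(k < m) (A i j * f k j))); last first.
  by move=> j _; rewrite big_distrr.
exact: exchange_big.
Qed.

Definition mcomb m (c : 'I_m -> R) (B : 'I_m -> mat n) : mat n :=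
  fun i j => \big[Rplus/0]_(k < m) (c k * B k i j).

Lemma mv_mcomb m (c : 'I_m -> R) (B : 'I_m -> mat n) x :
  mv (mcomb c B) x = vsum (fun k => vscale (c k) (mv (B k) x)).
Proof.
apply: vec_ext => i; rewrite /mv /mcomb /vsum /vscale.
rewrite (eq_bigr (fun j => \big[Rplus/0]_(k < m) (c k * B k i j * x j))); last first.
  by move=> j _; rewrite big_distrl.
rewrite exchange_big /=; apply: eq_bigr => k _; rewrite big_distrr /=.
by apply: eq_bigr => j _; ring.
Qed.

Definition shift (A : mat n) (mu : R) : mat n :=
  fun i j => A i j + (if i == j then mu else 0).

Lemma mv_shift A mu y : mv (shift A mu) y = vadd (mv A y) (vscale mu y).
Proof.
apply: vec_ext => i; rewrite /mv /shift /vadd /vscale.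
rewrite (eq_bigr (fun j => A i j * y j + (if i == j then mu else 0) * y j)); last first.
  by move=> j _; ring.
rewrite big_split /=; congr (_ + _).
rewrite (bigD1 i) //= eqxx big1 /=; first ring.
by move=> j /negbTE; rewrite eq_sym => ->; ring.
Qed.

Lemma shift_cancel A mu : shift (shift A mu) (- mu) = A.
Proof. by apply: mat_ext => i j; rewrite /shift; case: (i == j); ring. Qed.

Lemma mcomb_shift m (c : 'I_m -> R) (C : 'I_m -> mat n) (lam : 'I_m -> R) :
  mcomb c (fun k => shift (C k) (lam k)) =
  shift (mcomb c C) (\big[Rplus/0]_(k < m) (c k * lam k)).
Proof.
apply: mat_ext => i j; rewrite /mcomb /shift.
rewrite (eq_bigr (fun k => c k * C k i j + c k * (if i == j then lam k else 0))); last first.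
  by move=> k _; ring.
rewrite big_split /=; congr (_ + _); case: (i == j) => //.
by rewrite big1 // => k _; ring.
Qed.

End VectorAlgebra.

Section Span.
Variable n : nat.
Variable G : vec n -> Prop.

Lemma span_in x : G x -> span G x.
Proof.
move=> Gx; exists 1%nat, (fun _ => 1), (fun _ => x); split => //.
by apply: vec_ext => i; rewrite /vsum big_ord1 /vscale; ring.
Qed.

Lemma span0 : span G vzero.
Proof.
exists 0%nat, (fun _ => 0), (fun _ => vzero); split => [[]//|].
by apply: vec_ext => i; rewrite /vsum big_ord0.
Qed.

Lemma span_add x y : span G x -> span G y -> span G (vadd x y).
Proof.
move=> [m1 [c1 [v1 [Hv1 ->]]]] [m2 [c2 [v2 [Hv2 ->]]]].
exists (m1 + m2)%nat,
  (fun k => match fintype.split k with inl a => c1 a | inr b => c2 b end),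
  (fun k => match fintype.split k with inl a => v1 a | inr b => v2 b end).
split; first by move=> k; case: (fintype.split k).
apply: vec_ext => i; rewrite /vsum /vadd /vscale big_split_ord /=.
congr (_ + _); apply: eq_bigr => k _.
- by have := unsplitK (inl k : 'I_m1 + 'I_m2) => /= ->.
- by have := unsplitK (inr k : 'I_m1 + 'I_m2) => /= ->.
Qed.

Lemma span_scale r x : span G x -> span G (vscale r x).
Proof.
move=> [m [c [v [Hv ->]]]]; exists m, (fun k => r * c k), v; split => //.
by apply: vec_ext => i; rewrite /vsum /vscale big_distrr; apply: eq_bigr => k _ /=; ring.
Qed.

Lemma span_comb m (c : 'I_m -> R) (v : 'I_m -> vec n) :
  (forall k, span G (v k)) -> span G (vsum (fun k => vscale (c k) (v k))).
Proof.
move=> Hv; apply: vsum_closed => [||k]; [exact: span0 | exact: span_add | exact: span_scale].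
Qed.

Lemma span_convex_cone : is_cone (span G) /\ convex_set (span G) /\ span G vzero.
Proof.
split; first by split; [exists vzero; exact: span0 | move=> r x _; exact: span_scale].
split; last exact: span0.
by move=> x y t Hx Hy _ _; apply: span_add; apply: span_scale.
Qed.

Lemma span_invariant (B : mat n) :
  (forall v, G v -> span G (mv B v)) -> maps_into B (span G).
Proof.
move=> H y [m [c [v [Hv ->]]]]; rewrite mv_vsum.
rewrite (_ : (fun k => mv B (vscale (c k) (v k))) = fun k => vscale (c k) (mv B (v k))).
  by apply: span_comb => k; apply: H.
by apply: functional_extensionality => k; rewrite mv_scale.
Qed.

Lemma shift_span_invariant (B : mat n) mu :
  maps_into B (span G) -> maps_into (shift B mu) (span G).
Proof. by move=> HB x Hx; rewrite mv_shift; apply: span_add; [exact: HB | exact: span_scale]. Qed.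

Lemma mcomb_span_invariant m (c : 'I_m -> R) (B : 'I_m -> mat n) :
  (forall k, maps_into (B k) (span G)) -> maps_into (mcomb c B) (span G).
Proof. by move=> HB x Hx; rewrite mv_mcomb; apply: span_comb => k; apply: HB. Qed.

End Span.

Section Cones.
Variable n : nat.

(* A closed cone contains 0, as a limit of r x with r -> 0. *)
Lemma closed_cone_zero (G : vec n -> Prop) : is_cone G -> closed_set G -> G vzero.
Proof.
move=> [[x Gx] Gs] Gcl; apply: Gcl => eps Heps.
have HN := norm1_ge0 x.
set r := eps / (1 + norm1 x).
have Hr : 0 < r by apply: Rdiv_lt_0_compat; lra.
have Hre : r * (1 + norm1 x) = eps by rewrite /r; field; lra.
exists (vscale r x); split; first exact: Gs.
move=> i; rewrite /vzero /vscale Rminus_0_l Rabs_Ropp Rabs_mult (Rabs_pos_eq r); last lra.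
have := norm1_coord x i; nra.
Qed.

Section ConvexCone.
Variable G : vec n -> Prop.
Hypotheses (Gcone : is_cone G) (Gconv : convex_set G) (G0 : G vzero).

Lemma cone_add x y : G x -> G y -> G (vadd x y).
Proof.
move=> Gx Gy; have H := @Gconv x y (/2) Gx Gy ltac:(lra) ltac:(lra).
have := proj2 Gcone 2 _ ltac:(lra) H.
suff -> : vscale 2 (vadd (vscale (/2) x) (vscale (1 - /2) y)) = vadd x y by [].
by apply: vec_ext => i; rewrite /vscale /vadd; field.
Qed.

Lemma cone_scale r x : 0 <= r -> G x -> G (vscale r x).
Proof.
move=> Hr Gx; case: (Rle_lt_or_eq_dec _ _ Hr) => [Hr'|<-]; first exact: (proj2 Gcone).
by have -> : vscale 0 x = vzero by apply: vec_ext => i; rewrite /vscale /vzero; ring.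
Qed.

Lemma cone_comb m (c : 'I_m -> R) (v : 'I_m -> vec n) :
  (forall k, 0 <= c k) -> (forall k, G (v k)) -> G (vsum (fun k => vscale (c k) (v k))).
Proof. by move=> Hc Hv; apply: vsum_closed => // [|k]; [exact: cone_add | exact: cone_scale]. Qed.

End ConvexCone.

Variable K : vec n -> Prop.
Hypothesis HK : proper_cone K.

Lemma K0 : K vzero.
Proof. by case: HK => [Kc [_ [_ [Kcl _]]]]; exact: closed_cone_zero. Qed.

Lemma K_add x y : K x -> K y -> K (vadd x y).
Proof. by case: HK => [Kc [Kconv _]]; apply: cone_add. Qed.

Lemma K_scale r x : 0 <= r -> K x -> K (vscale r x).
Proof. by case: HK => [Kc _]; apply: cone_scale => //; exact: K0. Qed.

Lemma K_comb m (c : 'I_m -> R) (v : 'I_m -> vec n) :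
  (forall k, 0 <= c k) -> (forall k, K (v k)) -> K (vsum (fun k => vscale (c k) (v k))).
Proof. by case: HK => [Kc [Kconv _]]; apply: cone_comb => //; exact: K0. Qed.

Lemma mcomb_piK m (c : 'I_m -> R) (B : 'I_m -> mat n) :
  (forall k, 0 <= c k) -> (forall k, piK K (B k)) -> piK K (mcomb c B).
Proof. by move=> Hc HB x Kx; rewrite mv_mcomb; apply: K_comb => // k; apply: HB. Qed.

Section Face.
Variable F : vec n -> Prop.
Hypothesis HF : is_face K F.

Lemma face_sub_K x : F x -> K x.
Proof. by case: HF => [_ [_ [FK _]]]; apply: FK. Qed.

Lemma face_split y z : F (vadd y z) -> K y -> K z -> F y.
Proof.
move=> Fyz Ky Kz; case: HF => [_ [_ [_ Ff]]]; apply: (Ff (vadd y z)) => //.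
  rewrite /coneLe (_ : vsub (vadd y z) y = z) //.
  by apply: vec_ext => i; rewrite /vsub /vadd; ring.
rewrite /coneLe (_ : vsub y vzero = y) //.
by apply: vec_ext => i; rewrite /vsub /vzero; ring.
Qed.

Lemma face0 : F vzero.
Proof.
case: HF => [[[x Fx] _] _]; apply: (@face_split vzero x).
- by rewrite (_ : vadd vzero x = x) //; apply: vec_ext => i; rewrite /vadd /vzero; ring.
- exact: K0.
- exact: face_sub_K.
Qed.

Lemma face_scale r x : 0 <= r -> F x -> F (vscale r x).
Proof. by case: HF => [Fc _]; apply: cone_scale => //; exact: face0. Qed.

Lemma face_comb m (c : 'I_m -> R) (v : 'I_m -> vec n) :
  (forall k, 0 <= c k) -> (forall k, F (v k)) -> F (vsum (fun k => vscale (c k) (v k))).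
Proof. by case: HF => [Fc [Fconv _]]; apply: cone_comb => //; exact: face0. Qed.

Lemma face_comb_split m (c : 'I_m -> R) (v : 'I_m -> vec n) :
  (forall k, 0 <= c k) -> (forall k, K (v k)) ->
  F (vsum (fun k => vscale (c k) (v k))) -> forall k, 0 < c k -> F (v k).
Proof.
move=> Hc Hv HFs k Hk.
set r := vsum (fun j => vscale (if j == k then 0 else c j) (v j)).
have Kr : K r by apply: K_comb => // j; case: (j == k) => //; lra.
have Hsplit : vsum (fun k => vscale (c k) (v k)) = vadd (vscale (c k) (v k)) r.
  apply: vec_ext => i; rewrite /r /vsum /vadd /vscale (bigD1 k) //=.
  rewrite (bigD1 k (P := predT)) //= eqxx Rmult_0_l Rplus_0_l.
  by congr (_ + _); apply: eq_bigr => j /negbTE ->.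
rewrite Hsplit in HFs.
have Fck := face_split HFs (K_scale (Rlt_le _ _ Hk) (Hv k)) Kr.
have := face_scale (Rlt_le _ _ (Rinv_0_lt_compat _ Hk)) Fck.
suff -> : vscale (/ c k) (vscale (c k) (v k)) = v k by [].
by apply: vec_ext => i; rewrite /vscale; field; lra.
Qed.

(* K /\ span F = F: write y = p - q with p, q nonnegative combinations of
   vectors of F; then y + q = p lies in F, so y does. *)
Lemma face_span y : K y -> span F y -> F y.
Proof.
move=> Ky [m [c [v [Hv Hy]]]].
pose pos r := Rmax r 0.
have pos_ge0 r : 0 <= pos r by rewrite /pos /Rmax; case: Rle_dec; lra.
have pos_split r : pos r = r + pos (- r) by rewrite /pos /Rmax; case: Rle_dec; case: Rle_dec; lra.
set p := vsum (fun k => vscale (pos (c k)) (v k)).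
set q := vsum (fun k => vscale (pos (- c k)) (v k)).
have Fp : F p by apply: face_comb.
have Fq : F q by apply: face_comb.
have Hp : p = vadd y q.
  apply: vec_ext => i; rewrite Hy /p /q /vadd /vsum /vscale -big_split.
  by apply: eq_bigr => k _ /=; rewrite pos_split; ring.
by apply: (@face_split y q) => //; [rewrite -Hp | exact: face_sub_K].
Qed.

End Face.
End Cones.

Section FiniteSpanningFamily.
Variable n : nat.
Variable M : mat n -> Prop.

Definition flat (A : mat n) : 'rV[R]_(n * n) := mxvec (\matrix_(i, j) A i j).

(* The matrix whose rows are the flattenings of the entries of s (A0 is the
   default value of nth, irrelevant for indices below size s). *)
Definition stack (A0 : mat n) (s : seq (mat n)) : 'M[R]_(size s, n * n) :=
  \matrix_(k < size s) flat (nth A0 s k).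

Lemma stack_cons A0 A s : (stack A0 s <= stack A0 (A :: s))%MS.
Proof.
apply/row_subP => i; rewrite /stack rowK.
by apply: (@eq_row_sub _ _ _ _ _ (lift ord0 i)); rewrite rowK lift0.
Qed.

Lemma stack_head A0 A s : (flat A <= stack A0 (A :: s))%MS.
Proof. by apply: (@eq_row_sub _ _ _ _ _ ord0); rewrite /stack rowK. Qed.

(* Greedy extension: as long as some member of M is outside the row space of
   the list, prepending it raises the rank; the rank is bounded by n * n, so
   after at most d more steps the row space contains all of M. *)
Lemma spanning_list_ext A0 d s : (forall k, M (nth A0 s k)) -> (0 < size s)%nat ->
  (n * n - \rank (stack A0 s) <= d)%nat ->
  exists s', (forall k, M (nth A0 s' k)) /\ (0 < size s')%nat /\
    forall A, M A -> (flat A <= stack A0 s')%MS.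
Proof.
elim: d s => [|d IH] s Hs Hsz Hd;
  (case: (classic (forall A, M A -> (flat A <= stack A0 s)%MS)) => Hall; first by exists s);
  (have [A [MA HA]] : exists A, M A /\ ~~ (flat A <= stack A0 s)%MS
    by apply: NNPP => H; apply: Hall => A MA; apply: NNPP => H2; apply: H;
       exists A; split => //; apply/negP);
  (have Hrank : (\rank (stack A0 s) < \rank (stack A0 (A :: s)))%nat
    by apply: rank_ltmx; rewrite ltmxE stack_cons /=; apply: contra HA => H;
       apply: submx_trans H; apply: stack_head);
  have := rank_leq_col (stack A0 (A :: s)).
- by move: Hd Hrank; lia.
- move=> Hcol; apply: (IH (A :: s)) => //; first by case=> [|k] /=.
  by move: Hd Hrank Hcol; lia.
Qed.

Lemma finite_spanning_family : (exists A, M A) ->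
  exists m (B : 'I_m -> mat n), (0 < m)%nat /\ (forall k, M (B k)) /\
    forall A, M A -> exists c : 'I_m -> R, A = mcomb c B.
Proof.
move=> [A0 MA0].
have [s [Hs [Hsz Hspan]]] := @spanning_list_ext A0 (n * n) [:: A0]
  ltac:(by case=> [|[|k]]) erefl ltac:(by rewrite leq_subr).
exists (size s), (fun k => nth A0 s k); split => //; split => // A MA.
have /submxP [D HD] := Hspan A MA.
exists (fun k => D ord0 k); apply: mat_ext => i j.
have := congr1 (fun X : 'rV[R]_(n * n) => X ord0 (mxvec_index i j)) HD.
rewrite /= /flat mxvecE !mxE => ->.
by apply: eq_bigr => k _; rewrite /stack !mxE mxvecE mxE.
Qed.

End FiniteSpanningFamily.

Section Exponential.
Variable n : nat.

Lemma sumR_le m (f g : 'I_m -> R) : (forall k, f k <= g k) ->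
  \big[Rplus/0]_(k < m) f k <= \big[Rplus/0]_(k < m) g k.
Proof. by move=> H; apply: (big_ind2 (fun a b => a <= b)) => //; [lra | move=> a b c d; lra]. Qed.

Lemma Rabs_sumR m (f : 'I_m -> R) :
  Rabs (\big[Rplus/0]_(k < m) f k) <= \big[Rplus/0]_(k < m) Rabs (f k).
Proof.
apply: (big_ind2 (fun a b => Rabs a <= b)) => [|a b c d H1 H2|k _]; last lra.
- by rewrite Rabs_R0; lra.
- by have := Rabs_triang a c; lra.
Qed.

Definition matnorm (A : mat n) := \big[Rplus/0]_(i < n) \big[Rplus/0]_(j < n) Rabs (A i j).

Lemma matnorm_ge0 A : 0 <= matnorm A.
Proof. by apply: sumR_ge0 => i; apply: sumR_ge0 => j; exact: Rabs_pos. Qed.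

Lemma norm1_mv (A : mat n) y : norm1 (mv A y) <= matnorm A * norm1 y.
Proof.
rewrite /norm1 /matnorm big_distrl /=; apply: sumR_le => i.
rewrite /mv big_distrl /=; apply: Rle_trans (Rabs_sumR _) _; apply: sumR_le => j.
by rewrite Rabs_mult; apply: Rmult_le_compat_l; [exact: Rabs_pos | exact: norm1_coord].
Qed.

Lemma norm1_iter (A : mat n) x k : norm1 (iter k (mv A) x) <= matnorm A ^ k * norm1 x.
Proof.
elim: k => [|k IH] /=; first lra.
by apply: Rle_trans (norm1_mv _ _) _; have := matnorm_ge0 A; nra.
Qed.

Lemma mv_sum_f (A : mat n) (c : nat -> R) (Y : nat -> vec n) N :
  mv A (fun i => sum_f_R0 (fun j => c j * Y j i) N) =
  (fun i => sum_f_R0 (fun j => c j * mv A (Y j) i) N).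
Proof.
elim: N => [|N IH] /=; first exact: (mv_scale A (c 0%nat) (Y 0%nat)).
change (mv A (vadd (fun i => sum_f_R0 (fun j => c j * Y j i) N) (vscale (c (S N)) (Y (S N)))) =
  fun i => sum_f_R0 (fun j => c j * mv A (Y j) i) N + c (S N) * mv A (Y (S N)) i).
by rewrite mv_add mv_scale IH.
Qed.

Lemma iter_shift_binomial (A : mat n) mu x k :
  iter k (mv (shift A mu)) x =
  (fun i => sum_f_R0 (fun j => (INR 'C(k, j) * mu ^ (k - j)) * iter j (mv A) x i) k).
Proof.
elim: k => [|k IH]; first by apply: vec_ext => i /=; ring.
rewrite [iter _ _ _]/= IH mv_shift mv_sum_f; apply: vec_ext => i; rewrite /vadd /vscale.
set Y := fun j => iter j (mv A) x.
change (sum_f_R0 (fun j => INR 'C(k, j) * mu ^ (k - j) * Y (S j) i) k +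
  mu * sum_f_R0 (fun j => INR 'C(k, j) * mu ^ (k - j) * Y j i) k =
  sum_f_R0 (fun j => INR 'C(k.+1, j) * mu ^ (k.+1 - j) * Y j i) (S k)).
(* Pascal's rule splits the right-hand side into the two sums on the left. *)
rewrite (decomp_sum _ (S k)) /=; last lia.
rewrite (sum_eq (fun j => INR 'C(k.+1, j.+1) * mu ^ (k.+1 - j.+1) * Y j.+1 i)
   (fun j => INR 'C(k, j) * mu ^ (k - j) * Y (S j) i + INR 'C(k, j.+1) * mu ^ (k - j) * Y (S j) i));
  last by move=> j _; rewrite binS plus_INR subSS; ring.
rewrite sum_plus scal_sum.
set h := fun j => INR 'C(k, j) * mu ^ (k.+1 - j) * Y j i.
rewrite (sum_eq (fun j => INR 'C(k, j) * mu ^ (k - j) * Y j i * mu) h); last first.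
  by move=> j /leP Hj; rewrite /h subSn //=; ring.
have -> : sum_f_R0 h k = sum_f_R0 h (S k).
  by rewrite /= /h bin_small //= Rmult_0_l Rmult_0_l Rplus_0_r.
rewrite (decomp_sum h (S k)) /=; last lia.
rewrite /h bin0 subn0 /=.
rewrite (sum_eq (fun l => INR 'C(k, l.+1) * mu ^ (k.+1 - l.+1) * mv A (Y l) i)
  (fun l => INR 'C(k, l.+1) * mu ^ (k - l) * mv A (Y l) i)) //.
ring.
Qed.

Lemma fact_factorial k : Factorial.fact k = k`!.
Proof. by elim: k => //= k IH; rewrite factS IH. Qed.

(* The coefficient identity behind e^((A + mu) t) = e^(At) e^(mu t). *)
Lemma exp_coeff_product (A : mat n) mu t x i j k : (j <= k)%nat ->
  t ^ j / INR (Factorial.fact j) * iter j (mv A) x i *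
    ((mu * t) ^ (k - j) / INR (Factorial.fact (k - j))) =
  t ^ k / INR (Factorial.fact k) * (INR 'C(k, j) * mu ^ (k - j) * iter j (mv A) x i).
Proof.
move=> Hj.
have Hf : INR (Factorial.fact k) =
    INR 'C(k, j) * (INR (Factorial.fact j) * INR (Factorial.fact (k - j))).
  by rewrite -!mult_INR !fact_factorial !multE bin_fact.
have Ht : t ^ k = t ^ j * t ^ (k - j) by rewrite -pow_add; congr pow; move: Hj; lia.
have HC : 0 < INR 'C(k, j) by apply: lt_0_INR; apply/ltP; rewrite bin_gt0.
have H1 := INR_fact_neq_0 j; have H2 := INR_fact_neq_0 (k - j).
by rewrite Hf Ht Rpow_mult_distr; field; repeat split => //; lra.
Qed.

Lemma is_series_exp c : is_series (fun l => c ^ l / INR (Factorial.fact l)) (exp c).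
Proof.
apply: is_series_ext (is_exp_Reals c) => k.
by rewrite pow_n_pow /scal /= /mult /= /Rdiv; ring.
Qed.

Lemma exp_term_bound (A : mat n) t x i j :
  Rabs (t ^ j / INR (Factorial.fact j) * iter j (mv A) x i) <=
  (Rabs t * matnorm A) ^ j / INR (Factorial.fact j) * norm1 x.
Proof.
have HF : 0 < INR (Factorial.fact j) by apply: INR_fact_lt_0.
rewrite /Rdiv !Rabs_mult Rabs_inv (Rabs_pos_eq (INR _)); last lra.
rewrite -RPow_abs Rpow_mult_distr.
have Hb : Rabs (iter j (mv A) x i) <= matnorm A ^ j * norm1 x.
  exact: Rle_trans (norm1_coord _ i) (norm1_iter _ _ _).
have H0 : 0 <= Rabs t ^ j * / INR (Factorial.fact j).
  by apply: Rmult_le_pos; [apply: pow_le; exact: Rabs_pos | apply: Rlt_le; exact: Rinv_0_lt_compat].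
have -> : Rabs t ^ j * matnorm A ^ j * / INR (Factorial.fact j) * norm1 x =
   (Rabs t ^ j * / INR (Factorial.fact j)) * (matnorm A ^ j * norm1 x) by ring.
exact: Rmult_le_compat_l.
Qed.

(* The exponential series converges absolutely, being dominated by
   e^(|t| |A|) |x|. *)
Lemma exp_series_abs (A : mat n) t x i :
  ex_series (fun j => Rabs (t ^ j / INR (Factorial.fact j) * iter j (mv A) x i)).
Proof.
apply: (@ex_series_le _ _ _ (fun j => (Rabs t * matnorm A) ^ j / INR (Factorial.fact j) * norm1 x)).
  by move=> j; rewrite /norm /= /abs /= Rabs_Rabsolu; exact: exp_term_bound.
apply: (ex_series_ext (fun j => scal (norm1 x) ((Rabs t * matnorm A) ^ j / INR (Factorial.fact j)))).
  by move=> j; rewrite /scal /= /mult /=; ring.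
by apply: ex_series_scal; eexists; exact: is_series_exp.
Qed.

(* e^((A + mu I) t) x = e^(mu t) e^(A t) x, by a Cauchy product of series. *)
Lemma is_expAt_shift (A : mat n) mu t x y :
  is_expAt A t x y -> is_expAt (shift A mu) t x (vscale (exp (mu * t)) y).
Proof.
move=> Hy i; apply/is_series_Reals; rewrite /vscale Rmult_comm.
have Hexp_abs : ex_series (fun l => Rabs ((mu * t) ^ l / INR (Factorial.fact l))).
  apply: (ex_series_ext (fun l => Rabs (mu * t) ^ l / INR (Factorial.fact l))).
    move=> l; have HF : 0 < INR (Factorial.fact l) by apply: INR_fact_lt_0.
    rewrite /Rdiv [Rabs (_ * / _)]Rabs_mult Rabs_inv (Rabs_pos_eq (INR _)); last lra.
    by rewrite RPow_abs.
  by eexists; exact: is_series_exp.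
have := @is_series_mult _ _ _ _ (proj2 (is_series_Reals _ _) (Hy i)) (@is_series_exp (mu * t))
  (exp_series_abs A t x i) Hexp_abs.
apply: is_series_ext => k.
rewrite iter_shift_binomial scal_sum; apply: sum_eq => j /leP Hj.
by rewrite exp_coeff_product //; ring.
Qed.

Lemma eventually_forall (P : 'I_n -> nat -> Prop) :
  (forall i, exists N, forall m, (N <= m)%nat -> P i m) -> exists N, forall i, P i N.
Proof.
move=> H.
suff [N HN] : exists N, forall i, i \in enum 'I_n -> forall m, (N <= m)%nat -> P i m.
  by exists N => i; apply: HN => //; rewrite mem_enum.
elim: (enum 'I_n) => [|a s [N HN]]; first by exists 0%nat.
have [Na Ha] := H a.
exists (maxn N Na) => i; rewrite inE => /orP [/eqP -> | Hi] m Hm.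
- by apply: Ha; apply: leq_trans Hm; rewrite leq_maxr.
- by apply: HN => //; apply: leq_trans Hm; rewrite leq_maxl.
Qed.

Lemma closed_set_limit (K : vec n -> Prop) : closed_set K ->
  forall (S : nat -> vec n) z, (forall N, K (S N)) ->
  (forall i, Un_cv (fun N => S N i) (z i)) -> K z.
Proof.
move=> Kcl S z KS Hcv; apply: Kcl => eps Heps.
have [N HN] : exists N, forall i, Rabs (z i - S N i) < eps.
  apply: (@eventually_forall (fun i m => Rabs (z i - S m i) < eps)) => i.
  have [N HN] := Hcv i eps Heps; exists N => m Hm.
  by rewrite Rabs_minus_sym; apply: (HN m); apply/leP.
by exists (S N); split.
Qed.

Variable K : vec n -> Prop.
Hypothesis HK : proper_cone K.

(* Every element of pi(K) is exponentially K-nonnegative: the partial sums of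
   e^(Pt) x are nonnegative combinations of the vectors P^k x of K. *)
Lemma piK_exp_K_nonneg (P : mat n) : piK K P -> exp_K_nonneg K P.
Proof.
move=> HP t x y Ht Kx Hy.
have KP : forall k, K (iter k (mv P) x) by elim => //= k IH; apply: HP.
have Hc : forall k, 0 <= t ^ k / INR (Factorial.fact k).
  move=> k; apply: Rmult_le_pos; first exact: pow_le.
  by apply: Rlt_le; apply: Rinv_0_lt_compat; exact: INR_fact_lt_0.
apply: (closed_set_limit (proj1 (proj2 (proj2 (proj2 HK)))) _ Hy).
elim => [|N IH]; first exact: (K_scale HK (Hc 0%nat) (KP 0%nat)).
exact: (K_add HK IH (K_scale HK (Hc (S N)) (KP (S N)))).
Qed.

(* If A + mu I lies in pi(K) then A is exponentially K-nonnegative, since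
   e^(At) x = e^(-mu t) e^((A + mu I) t) x. *)
Lemma exp_K_nonneg_of_shift (A : mat n) mu : piK K (shift A mu) -> exp_K_nonneg K A.
Proof.
move=> HP t x y Ht Kx Hy.
have Kz := piK_exp_K_nonneg HP Ht Kx (is_expAt_shift mu Hy).
have -> : y = vscale (exp (- (mu * t))) (vscale (exp (mu * t)) y).
  apply: vec_ext => i; rewrite /vscale -Rmult_assoc -exp_plus.
  by rewrite (_ : - (mu * t) + mu * t = 0) ?exp_0; ring.
by apply: K_scale => //; apply: Rlt_le; exact: exp_pos.
Qed.

End Exponential.

Lemma choice_fun (I T : Type) (P : I -> T -> Prop) :
  (forall i, exists x, P i x) -> exists f : I -> T, forall i, P i (f i).
Proof.
move=> H; exists (fun i => proj1_sig (constructive_indefinite_description _ (H i))) => i.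
exact: proj2_sig.
Qed.

Section MainTheorem.
Variable n : nat.

Lemma uniform_weights_pos m : (0 < m)%nat -> forall k : 'I_m, 0 < / INR m.
Proof. by move=> Hm k; apply: Rinv_0_lt_compat; apply: lt_0_INR; apply/ltP. Qed.

Lemma average_in_conv (M : mat n -> Prop) m (B : 'I_m -> mat n) :
  (0 < m)%nat -> (forall k, M (B k)) -> conv M (mcomb (fun _ => / INR m) B).
Proof.
move=> Hm HB; exists m, (fun _ => / INR m), B; split; last split => //.
  by move=> k; apply: Rlt_le; exact: uniform_weights_pos.
rewrite sumR_const; field; apply: not_0_INR; move: Hm; lia.
Qed.

Variable K : vec n -> Prop.
Hypothesis HK : proper_cone K.

Lemma face_convex_cone F : is_face K F -> is_cone F /\ convex_set F /\ F vzero.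
Proof. by move=> HF; case: (HF) => [Fc [Fcv _]]; split; [|split; [|exact: (face0 HK HF)]]. Qed.

Lemma conv_invariant (M : mat n -> Prop) (G : vec n -> Prop) A :
  is_cone G -> convex_set G -> G vzero ->
  (forall B, M B -> maps_into B G) -> conv M A -> maps_into A G.
Proof.
move=> Gc Gcv G0 HMG [m [w [B [Hw [_ [HB ->]]]]]] x Gx.
by rewrite (mv_mcomb w B); apply: (cone_comb Gc Gcv G0) => // k; apply: HMG.
Qed.

Lemma no_common_invariant (M : mat n -> Prop) (T : (vec n -> Prop) -> vec n -> Prop) A :
  (forall F, nontrivial_face K F -> is_cone (T F) /\ convex_set (T F) /\ T F vzero) ->
  conv M A -> ~ (exists F, nontrivial_face K F /\ maps_into A (T F)) ->
  forall F, nontrivial_face K F -> exists B, M B /\ ~ maps_into B (T F).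
Proof.
move=> HT HA Hirr F HF; apply: NNPP => Hall; apply: Hirr; exists F; split => //.
have [Tc [Tcv T0]] := HT F HF.
apply: (conv_invariant Tc Tcv T0 _ HA) => B MB.
by apply: NNPP => HB; apply: Hall; exists B.
Qed.

(* If a positive combination of members of pi(K) maps a face F into itself,
   then so does each member (by the face property), which therefore leaves
   span F invariant. *)
Lemma summands_span_invariant F m (w : 'I_m -> R) (C : 'I_m -> mat n) :
  is_face K F -> (forall k, 0 < w k) -> (forall k, piK K (C k)) ->
  maps_into (mcomb w C) F -> forall k, maps_into (C k) (span F).
Proof.
move=> HF Hw HC HCF k; apply: span_invariant => u Fu; apply: span_in.
have := HCF u Fu; rewrite mv_mcomb => Hsum.
apply: (face_comb_split HK HF _ _ Hsum (Hw k)) => j; first exact: Rlt_le (Hw j).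
by apply: HC; exact: face_sub_K HF _ Fu.
Qed.

(* Sufficiency in part (i): the average of a finite spanning family of M. *)
Lemma irreducible_in_conv (M : mat n -> Prop) :
  (exists A, M A) -> (forall A, M A -> piK K A) ->
  (forall F, nontrivial_face K F -> exists B, M B /\ ~ maps_into B F) ->
  exists A, conv M A /\ K_irreducible K A.
Proof.
move=> HM0 HMpi Hfaces.
have [m [B [Hm [HBM Hspan]]]] := finite_spanning_family HM0.
have Hw := uniform_weights_pos Hm.
have HBpi k : piK K (B k) by exact: HMpi _ (HBM k).
exists (mcomb (fun _ => / INR m) B); split; first exact: average_in_conv.
split; first by apply: mcomb_piK => // k; exact: Rlt_le (Hw k).
move=> [F [HF HAF]].
have HBF := summands_span_invariant (proj1 HF) Hw HBpi HAF.
have [B' [MB' HB']] := Hfaces F HF; apply: HB' => v Fv.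
have [c Hc] := Hspan B' MB'.
apply: (face_span HK (proj1 HF)); first by apply: HMpi => //; exact: face_sub_K (proj1 HF) _ Fv.
by rewrite Hc; apply: mcomb_span_invariant => //; exact: span_in.
Qed.

(* Sufficiency in part (ii): with B_k = C_k + lam_k I, C_k in pi(K), the
   average A is D + L I with D the average of the C_k; A is exponentially
   K-nonnegative, and an A-invariant span F is D-invariant, so D maps F into F. *)
Lemma irreducible_exp_in_conv (M : mat n -> Prop) :
  (exists A, M A) -> (forall A, M A -> piK_plus_Lambda K A) ->
  (forall F, nontrivial_face K F -> exists B, M B /\ ~ maps_into B (span F)) ->
  exists A, conv M A /\ irreducible_exp_K_nonneg K A.
Proof.
move=> HM0 HMshift Hfaces.
have [m [B [Hm [HBM Hspan]]]] := finite_spanning_family HM0.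
have [CL HCL] : exists CL : 'I_m -> mat n * R,
    forall k, piK K (CL k).1 /\ B k = shift (CL k).1 (CL k).2.
  apply: (@choice_fun _ _ (fun k p => piK K p.1 /\ B k = shift p.1 p.2)) => k.
  by have [C [l [HC HBk]]] := HMshift _ (HBM k); exists (C, l).
set C := fun k => (CL k).1; set lam := fun k => (CL k).2; set w := fun _ : 'I_m => / INR m.
have HC k : piK K (C k) by exact: proj1 (HCL k).
have HB : B = fun k => shift (C k) (lam k) by apply: functional_extensionality => k; case: (HCL k).
set D := mcomb w C; set L := \big[Rplus/0]_(k < m) (w k * lam k).
have HD : piK K D by apply: mcomb_piK => // k; apply: Rlt_le; exact: uniform_weights_pos.
have HA : mcomb w B = shift D L by rewrite HB mcomb_shift.
exists (mcomb w B); split; first exact: average_in_conv.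
rewrite HA; split; first by apply: (exp_K_nonneg_of_shift HK (mu := - L)); rewrite shift_cancel.
move=> [F [HF HAF]].
have HDF : maps_into D F.
  move=> u Fu; apply: (face_span HK (proj1 HF)); first by apply: HD; exact: face_sub_K (proj1 HF) _ Fu.
  by rewrite -(shift_cancel D L); apply: shift_span_invariant HAF _ (span_in Fu).
have HCF := summands_span_invariant (proj1 HF) (uniform_weights_pos Hm) HC HDF.
have [B' [MB' HB']] := Hfaces F HF; apply: HB'.
have [c ->] := Hspan B' MB'; apply: mcomb_span_invariant => k.
by rewrite HB; exact: shift_span_invariant.
Qed.

End MainTheorem.

Theorem mainTheorem4 (n : nat) (K : vec n -> Prop) (HK : proper_cone K) :
  (forall M : mat n -> Prop,
     (exists A, M A) -> (forall A, M A -> piK K A) ->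
     ((exists A, conv M A /\ K_irreducible K A) <->
      (forall F, nontrivial_face K F -> exists A, M A /\ ~ maps_into A F)))
  /\
  (forall M : mat n -> Prop,
     (exists A, M A) -> (forall A, M A -> piK_plus_Lambda K A) -> bounded_set M ->
     ((exists A, conv M A /\ irreducible_exp_K_nonneg K A) <->
      (forall F, nontrivial_face K F -> exists A, M A /\ ~ maps_into A (span F)))).
Proof.
split => M HM0 HM; [|move=> _]; split.
- move=> [A [HA [_ Hirr]]].
  exact: (no_common_invariant (T := fun F => F) (fun F HF => face_convex_cone HK (proj1 HF)) HA Hirr).
- exact: irreducible_in_conv.
- move=> [A [HA [_ Hirr]]].
  exact: (no_common_invariant (T := span) (fun F _ => span_convex_cone F) HA Hirr).
- exact: irreducible_exp_in_conv.
Qed.
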